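(* Let $G=(V,E)$ be a finite, undirected, connected, vertex-transitive graph with unit edge weights and vertex set $V=\{v_1,\dots,v_N\}$, let $L=D-A$ be its graph Laplacian, and let $\phi_{\lambda_1},\dots,\phi_{\lambda_N}$ be an orthonormal basis of $\mathbb{C}^N$ of eigenvectors of $L$. For $t\ge 0$ let $H_t=e^{-tL}$, $D_i(t)=\operatorname{diag}(H_t(\cdot,v_i))$ and $\psi_{ij}(t)=D_i(t)\phi_{\lambda_j}$. Then for every $t\in[0,\infty)$ the family $\{\psi_{ij}(t)\}_{i,j=1}^N$ is a tight frame for $\mathbb{C}^N$.
   Context: $L=D-A$ with $A$ the adjacency matrix and $D$ the diagonal degree matrix. $H_t(\cdot,v_i)$ is the $i$-th column of $H_t$ and $\operatorname{diag}(x)$ the diagonal matrix with diagonal $x$. An automorphism of $G$ is a permutation $\pi$ of $V$ with $(u,v)\in E$ iff $(\pi(u),\pi(v))\in E$; $G$ is vertex-transitive if for all $u,v\in V$ there is an automorphism $\pi$ with $\pi(u)=v$. A frame $\{\psi_k\}$ for $\mathbb{C}^N$ is tight if there is $A>0$ with $\sum_k|\langle f,\psi_k\rangle|^2=A\|f\|^2$ for all $f\in\mathbb{C}^N$. *)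

From HB Require Import structures.
From mathcomp Require Import all_boot all_order all_algebra.
From mathcomp Require Import all_classical all_reals all_analysis.
From mathcomp Require Import complex.
From mathcomp Require Import fingroup perm.
Set Implicit Arguments. Unset Strict Implicit. Unset Printing Implicit Defensive.
Import Order.TTheory GRing.Theory Num.Theory.
Import numFieldNormedType.Exports.
Local Open Scope ring_scope.

(* A finite simple undirected graph on vertex set 'I_N = {v_1,...,v_N}
   is a symmetric irreflexive relation e (unit edge weights). *)
Definition simple_graph (N : nat) (e : rel 'I_N) : Prop :=
  symmetric e /\ irreflexive e.

Definition connected_graph (N : nat) (e : rel 'I_N) : Prop :=
  forall u v : 'I_N, connect e u v.

Definition graph_automorphism (N : nat) (e : rel 'I_N) (pi : {perm 'I_N}) : Prop :=
  forall u v : 'I_N, e u v = e (pi u) (pi v).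

Definition vertex_transitive (N : nat) (e : rel 'I_N) : Prop :=
  forall u v : 'I_N, exists pi : {perm 'I_N},
    graph_automorphism e pi /\ pi u = v.

Definition adjacency_mx (R : pzRingType) (N : nat) (e : rel 'I_N) : 'M[R]_N :=
  \matrix_(i, j) (e i j)%:R.

Definition degree_mx (R : pzRingType) (N : nat) (e : rel 'I_N) : 'M[R]_N :=
  \matrix_(i, j) ((i == j)%:R * (#|[set k | e i k]|)%:R).

Definition laplacian (R : pzRingType) (N : nat) (e : rel 'I_N) : 'M[R]_N :=
  degree_mx R e - adjacency_mx R e.

Definition expmx (R : realType) (N : nat) (A : 'M[R]_N) : 'M[R]_N :=
  limn (series (fun k => (k`!%:R)^-1 *: A ^+ k)).

Definition heat_kernel (R : realType) (N : nat) (e : rel 'I_N) (t : R) : 'M[R]_N :=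
  expmx (- (t *: laplacian R e)).

Definition cmx (R : realType) (m n : nat) (M : 'M[R]_(m, n)) : 'M[R[i]]_(m, n) :=
  map_mx (real_complex R) M.

Definition cdot (R : realType) (N : nat) (f g : 'cV[R[i]]_N) : R[i] :=
  \sum_(k < N) f k 0 * conjc (g k 0).

Definition heat_diag (R : realType) (N : nat) (e : rel 'I_N) (t : R) (i : 'I_N)
  : 'M[R[i]]_N :=
  diag_mx (cmx (col i (heat_kernel e t)))^T.

Definition tight_frame (R : realType) (N : nat) (I : finType)
  (psi : I -> 'cV[R[i]]_N) : Prop :=
  exists A : R, 0 < A /\
    forall f : 'cV[R[i]]_N,
      \sum_(k : I) `|cdot f (psi k)| ^+ 2 = real_complex R A * cdot f f.

(* Since the D_i(t) are real diagonal matrices, <f, D_i phi_j> = <D_i f, phi_j>,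
   so by Parseval the frame sum is sum_i ||D_i f||^2 = sum_k |f_k|^2 sum_i H_t(k,i)^2.
   The automorphisms of G commute with L, hence with H_t = e^{-tL}, and
   vertex-transitivity makes the squared row norm sum_i H_t(k,i)^2 independent of k.
   It is positive because L kills the constant vectors, so each row of H_t sums to 1. *)

From HB Require Import structures.
From mathcomp Require Import all_boot all_order all_algebra.
From mathcomp Require Import all_classical all_reals all_analysis.
From mathcomp Require Import complex.
From mathcomp Require Import fingroup perm.
From mathcomp Require Import ring.
Import Order.TTheory GRing.Theory Num.Theory.
Import numFieldNormedType.Exports.
Local Open Scope ring_scope.

(* Makes the complete uniform structure of real matrices visible to [normed_cvg]. *)
HB.instance Definition _ (R : realType) (m n : nat) := Complete.on 'M[R]_(m, n).

Section MatrixPowers.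
Context {R : pzRingType} {N : nat}.
Implicit Type B : 'M[R]_N.

Lemma exprn_perm_invariant B (pi : {perm 'I_N}) :
  (forall a b, B (pi a) (pi b) = B a b) ->
  forall k a b, (B ^+ k) (pi a) (pi b) = (B ^+ k) a b.
Proof.
move=> hB; elim=> [|k IHk] a b; first by rewrite expr0 !mxE (inj_eq perm_inj).
rewrite exprSr -[_ * B]/(_ *m B) !mxE (reindex_inj (@perm_inj _ pi)) /=.
by apply: eq_bigr => l _; rewrite IHk hB.
Qed.

Lemma row_sum_exprn B k :
  (forall a, \sum_b B a b = 0) -> forall a, \sum_b (B ^+ k) a b = (k == 0)%:R.
Proof.
move=> hB a; case: k => [|k].
  rewrite expr0 (bigD1 a) //= big1 => [|b /negPf ab]; rewrite mxE.
    by rewrite eqxx addr0.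
  by rewrite eq_sym ab.
rewrite exprSr -[_ * B]/(_ *m B); under eq_bigr do rewrite mxE.
by rewrite exchange_big /= big1 // => l _; rewrite -mulr_sumr hB mulr0.
Qed.

End MatrixPowers.

Section MatrixNorm.
Context {R : realType}.

Lemma mx_entry_norm_le {m n} (M : 'M[R]_(m, n)) i j : `|M i j| <= `|M|.
Proof. by rewrite -[`|M|]/(mx_norm M) mx_normrE; apply/bigmax_geP; right; exists (i, j). Qed.

Lemma mx_norm_le {m n} (M : 'M[R]_(m, n)) c :
  0 <= c -> (forall i j, `|M i j| <= c) -> `|M| <= c.
Proof. by move=> c0 hM; rewrite -[`|M|]/(mx_norm M) mx_normrE; apply/bigmax_leP. Qed.

Lemma mx_normM_le {m n p} (A : 'M[R]_(m, n)) (B : 'M[R]_(n, p)) :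
  `|A *m B| <= n%:R * `|A| * `|B|.
Proof.
apply: mx_norm_le => [|i j]; first by rewrite !mulr_ge0.
rewrite mxE; apply: le_trans (ler_norm_sum _ _ _) _.
apply: le_trans (_ : _ <= \sum_(k < n) `|A| * `|B|) _.
  by apply: ler_sum => k _; rewrite normrM ler_pM ?mx_entry_norm_le.
by rewrite sumr_const card_ord -mulrA mulr_natl.
Qed.

Lemma mx_normX_le N (B : 'M[R]_N) k : `|B ^+ k| <= (N%:R * `|B|) ^+ k.
Proof.
elim: k => [|k IHk].
  by apply: mx_norm_le => // i j; rewrite mxE; case: (i == j); rewrite ?normr1 ?normr0.
rewrite !exprSr -[_ * B]/(_ *m B); apply: le_trans (mx_normM_le _ _) _.
by rewrite -mulrA mulrCA; apply: ler_wpM2r; rewrite ?mulr_ge0.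
Qed.

End MatrixNorm.

Section MatrixExponential.
Context {R : realType} {N : nat}.
Implicit Type B : 'M[R]_N.
Local Open Scope classical_set_scope.

Definition exp_term B k : 'M[R]_N := (k`!%:R)^-1 *: B ^+ k.

Lemma is_cvg_expmx_series B : cvgn (series (exp_term B)).
Proof.
apply/normed_cvg/(series_le_cvg _ _ _ (is_cvg_series_exp_coeff (N%:R * `|B|))) => k.
- exact: normr_ge0.
- by apply: exp_coeff_ge0; rewrite mulr_ge0.
- rewrite /= normrZ /exp_coeff /= mulrC ger0_norm ?invr_ge0 //.
  by rewrite ler_wpM2r ?invr_ge0 ?mx_normX_le.
Qed.

Lemma expmx_series_entry B k a b :
  series (exp_term B) k a b = \sum_(0 <= j < k) (j`!%:R)^-1 * (B ^+ j) a b.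
Proof. by rewrite /series /= summxE; apply: eq_bigr => j _; rewrite !mxE. Qed.

Lemma expmx_entry_cvg B a b :
  (fun k => series (exp_term B) k a b) @ \oo --> expmx B a b.
Proof. exact: (continuous_cvg _ (@coord_continuous R N N a b _) (is_cvg_expmx_series B)). Qed.

Lemma expmx_perm_invariant B (pi : {perm 'I_N}) :
  (forall a b, B (pi a) (pi b) = B a b) ->
  forall a b, expmx B (pi a) (pi b) = expmx B a b.
Proof.
move=> hB a b.
have same_partial_sums : (fun k => series (exp_term B) k (pi a) (pi b)) =
                         (fun k => series (exp_term B) k a b).
  apply: funext => k; rewrite !expmx_series_entry.
  by apply: eq_bigr => j _; rewrite exprn_perm_invariant.
have := expmx_entry_cvg B (pi a) (pi b); rewrite same_partial_sums => cvg_pi.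
exact: cvg_unique _ cvg_pi (expmx_entry_cvg B a b).
Qed.

Lemma expmx_row_sum B :
  (forall a, \sum_b B a b = 0) -> forall a, \sum_b expmx B a b = 1.
Proof.
move=> hB a.
have cvg_row : (fun k => \sum_b series (exp_term B) k a b) @ \oo --> \sum_b expmx B a b.
  apply: (@cvg_big R 'I_N +%R 0 xpredT add_continuous) => // b _.
  exact: expmx_entry_cvg.
have cvg_one : (fun k => \sum_b series (exp_term B) k a b) @ \oo --> (1 : R).
  apply: cvg_near_cst; exists 1%N => // -[//|k] _.
  under eq_bigr do rewrite expmx_series_entry.
  rewrite exchange_big big_nat_recl //= -mulr_sumr row_sum_exprn // invr1 mulr1.
  by rewrite big1_seq ?addr0 // => j _; rewrite -mulr_sumr row_sum_exprn // mulr0.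
exact: cvg_unique _ cvg_row cvg_one.
Qed.

End MatrixExponential.

Section HeatKernel.
Context {R : realType} {N : nat} (e : rel 'I_N).

Lemma laplacian_row_sum a : \sum_b laplacian R e a b = 0.
Proof.
under eq_bigr do rewrite !mxE.
rewrite sumrB (bigD1 a) //= eqxx mul1r big1 ?addr0 => [|b /negPf ab]; last first.
  by rewrite eq_sym ab mul0r.
apply/eqP; rewrite subr_eq0 -natr_sum -sum1_card big_mkcond /=; apply/eqP.
by congr _%:R; apply: eq_bigr => b _; rewrite inE; case: (e a b).
Qed.

Lemma laplacian_perm_invariant (pi : {perm 'I_N}) :
  graph_automorphism e pi ->
  forall a b, laplacian R e (pi a) (pi b) = laplacian R e a b.
Proof.
move=> auto_pi a b; rewrite !mxE (inj_eq perm_inj) -auto_pi.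
suff -> : [set k | e (pi a) k] = pi @: [set k | e a k].
  by rewrite card_imset //; apply: perm_inj.
apply/setP => k; rewrite inE; apply/idP/imsetP => [eak | [l]].
  by exists ((pi^-1)%g k); rewrite ?permKV // inE auto_pi permKV.
by rewrite inE => eal ->; rewrite -auto_pi.
Qed.

Lemma heat_kernel_row_sum (t : R) a : \sum_b heat_kernel e t a b = 1.
Proof.
apply: expmx_row_sum => {}a; rewrite -scaleNr.
by under eq_bigr do rewrite mxE; rewrite -mulr_sumr laplacian_row_sum mulr0.
Qed.

Lemma heat_kernel_perm_invariant (t : R) (pi : {perm 'I_N}) :
  graph_automorphism e pi ->
  forall a b, heat_kernel e t (pi a) (pi b) = heat_kernel e t a b.
Proof.
move=> auto_pi; apply: expmx_perm_invariant => a b.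
by rewrite -scaleNr mxE [RHS]mxE laplacian_perm_invariant.
Qed.

Lemma heat_kernel_row_sqr_sum_const (t : R) :
  vertex_transitive e -> forall a a',
  \sum_b heat_kernel e t a b ^+ 2 = \sum_b heat_kernel e t a' b ^+ 2.
Proof.
move=> transitive a a'; have [pi [auto_pi <-]] := transitive a' a.
rewrite (reindex_inj (@perm_inj _ pi)) /=.
by apply: eq_bigr => b _; rewrite heat_kernel_perm_invariant.
Qed.

End HeatKernel.

Lemma sum_sqr_gt0 {R : realDomainType} {I : finType} {x : I -> R} :
  \sum_i x i = 1 -> 0 < \sum_i x i ^+ 2.
Proof.
move=> sum_x1; rewrite lt_def sumr_ge0 ?andbT => [|i _]; last exact: sqr_ge0.
apply: contra_neq (oner_neq0 R) => /psumr_eq0P sqr_x0.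
rewrite -sum_x1 big1 // => i _; apply/eqP; rewrite -sqrf_eq0; apply/eqP.
by rewrite sqr_x0 // => j _; apply: sqr_ge0.
Qed.

Section Frames.
Context {R : realType} {N : nat}.
Local Notation vec := 'cV[R[i]]_N.

Lemma conjc_realM (a : R) (b : R[i]) :
  conjc (real_complex R a * b) = real_complex R a * conjc b.
Proof. by case: b => x y; rewrite /conjc -complexr0 /=; congr (_ +i* _)%C; ring. Qed.

Lemma cdot_parseval (phi : 'I_N -> vec) :
  (forall j k, cdot (phi j) (phi k) = (j == k)%:R) ->
  forall g, \sum_j `|cdot g (phi j)| ^+ 2 = cdot g g.
Proof.
move=> ortho g.
pose P := \matrix_(m, j) phi j m 0 : 'M[R[i]]_N.
pose Q := \matrix_(j, m) conjc (phi j m 0) : 'M[R[i]]_N.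
(* N orthonormal vectors of C^N form a unitary matrix P, so P P^* = 1 as well. *)
have /mulmx1C/matrixP PQ : Q *m P = 1%:M.
  apply/matrixP => j k; rewrite !mxE eq_sym -ortho.
  by apply: eq_bigr => m _; rewrite !mxE mulrC.
have completeness m m' : \sum_j phi j m 0 * conjc (phi j m' 0) = (m == m')%:R.
  by move: (PQ m m'); rewrite !mxE => <-; apply: eq_bigr => j _; rewrite !mxE.
have normCK_conjc (x : R[i]) : `|x| ^+ 2 = x * conjc x := normCK x.
under eq_bigr do rewrite normCK_conjc /cdot rmorph_sum mulr_suml.
rewrite exchange_big /=; apply: eq_bigr => m _.
transitivity (\sum_m' g m 0 * conjc (g m' 0) * \sum_j phi j m' 0 * conjc (phi j m 0)).
  under eq_bigr do rewrite mulr_sumr.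
  rewrite exchange_big /=; apply: eq_bigr => m' _.
  rewrite mulr_sumr; apply: eq_bigr => j _; rewrite rmorphM /= conjcK; ring.
under eq_bigr do rewrite completeness.
by rewrite (bigD1 m) //= eqxx mulr1 big1 ?addr0 // => m' /negPf->; rewrite mulr0.
Qed.

Lemma cdot_real_diag (d : 'cV[R]_N) (f g : vec) :
  cdot f (diag_mx (cmx d)^T *m g) = cdot (diag_mx (cmx d)^T *m f) g.
Proof.
by apply: eq_bigr => k _; rewrite !mul_diag_mx !mxE conjc_realM; ring.
Qed.

Lemma tight_frame_real_diag (H : 'M[R]_N) (phi : 'I_N -> vec) (c : R) :
  (forall j k, cdot (phi j) (phi k) = (j == k)%:R) ->
  0 < c -> (forall a, \sum_b H a b ^+ 2 = c) ->
  tight_frame (fun ij : 'I_N * 'I_N => diag_mx (cmx (col ij.1 H))^T *m phi ij.2).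
Proof.
move=> ortho c_gt0 row_c; exists c; split => // f.
rewrite -(pair_bigA _ (fun i j => `|cdot f (diag_mx (cmx (col i H))^T *m phi j)| ^+ 2)) /=.
under eq_bigr do under eq_bigr do rewrite cdot_real_diag.
under eq_bigr do rewrite cdot_parseval //.
rewrite /cdot exchange_big mulr_sumr /=; apply: eq_bigr => k _.
rewrite -(row_c k) rmorph_sum mulr_suml; apply: eq_bigr => b _.
rewrite mul_diag_mx !mxE mulrC conjc_realM rmorphXn /=; ring.
Qed.

End Frames.

Theorem theorem4p2 (R : realType) (N : nat) (e : rel 'I_N)
  (phi : 'I_N -> 'cV[R[i]]_N) (lambda : 'I_N -> R[i]) :
  simple_graph e ->
  connected_graph e ->
  vertex_transitive e ->
  (* phi is an orthonormal basis of C^N ... *)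
  (forall j k : 'I_N, cdot (phi j) (phi k) = (j == k)%:R) ->
  (* ... consisting of eigenvectors of L *)
  (forall j : 'I_N, cmx (laplacian R e) *m phi j = lambda j *: phi j) ->
  forall t : R, 0 <= t ->
    tight_frame (fun ij : 'I_N * 'I_N => heat_diag e t ij.1 *m phi ij.2).
Proof.
move=> _ _ transitive ortho _ t _; rewrite /heat_diag.
have [a _ | no_vertex] := pickP (@predT 'I_N); last first.
  apply: (tight_frame_real_diag (heat_kernel e t) _ _ ortho ltr01) => a.
  by have := no_vertex a.
apply: (tight_frame_real_diag _ _ _ ortho (sum_sqr_gt0 (heat_kernel_row_sum e t a))).
by move=> a'; apply: heat_kernel_row_sqr_sum_const.
Qed.
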